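(* Define polynomials $Q_k(n)\in\mathbb{Q}[n]$ by $Q_0=1$, $Q_1=n$ and, for $k\ge 1$, $$Q_{k+1}(n)=(n-k)\,Q_k(n)+k(2n-k+1)\,Q_{k-1}(n).$$ Then for all integers $n\ge 0$ and $k\ge 0$, $$a_n^{(n-k)}=\frac{1}{k!}\,Q_k(n),$$ $Q_k$ has degree $k$, and explicitly $Q_2=n(n+1)$, $Q_3=(n-1)n(n+4)$, $Q_4=(n-1)n(n^2+7n-6)$, $Q_5=(n-2)(n-1)n(n+1)(n+12)$, $Q_6=(n-2)(n-1)n(n^3+18n^2+17n-120)$, $Q_7=(n-3)(n-2)(n-1)n(n^3+27n^2+116n-120)$, $Q_8=(n-3)(n-2)(n-1)n(n+1)(n+10)(n^2+23n-84)$, $Q_9=n(n-1)(n-2)(n-3)(n-4)(n^4+46n^3+467n^2+86n-3360)$, $Q_{10}=n(n-1)(n-2)(n-3)(n-4)(n^5+55n^4+665n^3-895n^2-16626n+15120)$.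
   Context: For integers $n\ge 0$ and $k\in\mathbb{Z}$, let $a_n^{(k)}$ be the coefficient of $x^{n+k}$ in $(1+x+x^2)^n$, so that $(1+x+x^2)^n=\sum_{k=-n}^{n}a_n^{(k)}x^{n+k}$ and $a_n^{(k)}=0$ for $|k|>n$. *)

From HB Require Import structures.
From mathcomp Require Import all_boot all_order all_algebra.
Set Implicit Arguments. Unset Strict Implicit. Unset Printing Implicit Defensive.
Import Order.TTheory GRing.Theory Num.Theory.
Local Open Scope ring_scope.

(* a_n^{(k)} : coefficient of x^(n+k) in (1+x+x^2)^n, zero when n+k < 0. *)
Definition trinom_coef (n : nat) (k : int) : rat :=
  match (n%:Z + k)%R with
  | Posz m => ((1 + 'X + 'X^2 : {poly rat}) ^+ n)`_m
  | Negz _ => 0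
  end.

(* Qpair k = (Q_k, Q_{k+1}); Q_{k+1} = (n-k) Q_k + k(2n-k+1) Q_{k-1}. *)
Fixpoint Qpair (k : nat) : {poly rat} * {poly rat} :=
  match k with
  | 0%N => (1, 'X)
  | k'.+1 =>
      let (q0, q1) := Qpair k' in
      (q1, ('X - (k%:R)%:P) * q1
             + ((k%:R)%:P * (2%:R *: 'X - (k%:R)%:P + 1)) * q0)
  end.

Definition Q (k : nat) : {poly rat} := (Qpair k).1.

From HB Require Import structures.
From mathcomp Require Import all_boot all_order all_algebra.
From mathcomp Require Import zify ring.
Import Order.TTheory GRing.Theory Num.Theory.
Local Open Scope ring_scope.

(* Write a_j(n) for the coefficient of x^j in T^n, T = 1 + x + x^2, and read
   coefficients at negative integer indices as 0 ([zcoef]).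
   1. Symmetry.  T^(n+1) = T^n * T gives a three-term recursion in n for the
      centred coefficients a_n^(k) = a_{n+k}(n); since it and the base case
      n = 0 are invariant under k -> -k, a_n^(-k) = a_n^(k).  Hence
      a_n^(n-k) = a_n^(k-n) = a_k(n).
   2. Recursion in k.  Differentiating, (T^n)' T = n T^n T' with T' = 1 + 2x;
      comparing coefficients of x^(k+1) gives
        (k+2) a_{k+2} = (n-k-1) a_{k+1} + (2n-k) a_k,   a_0 = 1,  a_1 = n,
      which is the recursion of Q_k(n)/k!, so Q_k(n) = k! a_k(n).
   3. Degree.  A two-step induction on the recursion shows Q_k is monic of
      size k+1 (the term k(2n-k+1) Q_{k-1} has degree < k+1).
   4. The closed forms of Q_2, ..., Q_10 follow by unfolding the recursion
      and normalising with [ring]. *)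

Definition zcoef {R : nzRingType} (p : {poly R}) (z : int) : R :=
  match z with Posz m => p`_m | Negz _ => 0 end.

Section IntegerCoefficients.
Variable R : nzRingType.
Implicit Types (p q : {poly R}) (z : int).

Lemma zcoef1 z : zcoef (1 : {poly R}) z = (z == 0)%:R.
Proof. by case: z => [[|m]|m] //=; rewrite coef1. Qed.

Lemma zcoefD p q z : zcoef (p + q) z = zcoef p z + zcoef q z.
Proof. by case: z => [m|m] /=; rewrite ?coefD ?addr0. Qed.

Lemma zcoefMn p z n : zcoef (p *+ n) z = zcoef p z *+ n.
Proof. by case: z => [m|m] /=; rewrite ?coefMn ?mul0rn. Qed.

Lemma zcoefMX p z : zcoef (p * 'X) z = zcoef p (z - 1).
Proof. by case: z => [[|m]|m] //=; rewrite coefMX //= subn1. Qed.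

Lemma zcoef_deriv p z : zcoef p^`() z = (z + 1)%:~R * zcoef p (z + 1).
Proof.
case: z => [m|[|m]] /=; last by rewrite mulr0.
- have -> : m%:Z + 1 = m.+1%:Z by rewrite -addn1.
  by rewrite /= coef_deriv -mulr_natl addn1.
- by rewrite mul0r.
Qed.

End IntegerCoefficients.

Definition trinomial {R : nzRingType} : {poly R} := 1 + 'X + 'X^2.

Lemma zcoef_mul_trinomial (R : nzRingType) (q : {poly R}) z :
  zcoef (q * trinomial) z = zcoef q z + zcoef q (z - 1) + zcoef q (z - 1 - 1).
Proof. by rewrite /trinomial !mulrDr mulr1 expr2 mulrA !zcoefD !zcoefMX. Qed.

Lemma trinom_coefE n k : trinom_coef n k = zcoef (trinomial ^+ n) (n%:Z + k).
Proof. by []. Qed.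

Lemma trinom_coefS n k :
  trinom_coef n.+1 k = trinom_coef n (k + 1) + trinom_coef n k + trinom_coef n (k - 1).
Proof.
rewrite !trinom_coefE exprSr zcoef_mul_trinomial.
have -> : n.+1%:Z + k = n%:Z + (k + 1) by rewrite -addn1 PoszD addrAC addrA.
by rewrite addrA addrK [n%:Z + (k - 1)]addrA.
Qed.

Lemma trinom_coef_sym n k : trinom_coef n (- k) = trinom_coef n k.
Proof.
elim: n k => [|n IH] k.
  by rewrite !trinom_coefE !add0r expr0 !zcoef1 oppr_eq0.
rewrite !trinom_coefS.
have -> : - k + 1 = - (k - 1) by rewrite opprB addrC.
have -> : - k - 1 = - (k + 1) by rewrite opprD.
by rewrite !IH addrC (addrC (trinom_coef n (k - 1))) addrA.
Qed.

Lemma deriv_exp_mul (R : comNzRingType) (p : {poly R}) n :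
  (p ^+ n)^`() * p = (p ^+ n * p^`()) *+ n.
Proof.
rewrite deriv_exp; case: n => [|n]; first by rewrite !mulr0n mul0r.
by rewrite mulrnAl -mulrA -exprSr mulrC.
Qed.

Lemma deriv_trinomial (R : comNzRingType) : (trinomial : {poly R})^`() = 1 + 'X *+ 2.
Proof. by rewrite /trinomial !derivE /= add0r mul1r mulr1 mulr2n. Qed.

(* Coefficientwise form of the differential equation of T^n, written with
   A z = coefficient of x^z in T^n. *)
Lemma trinomial_coef_ode (R : comNzRingType) n z :
  let A := zcoef ((trinomial : {poly R}) ^+ n) in
  (z + 1)%:~R * A (z + 1) + z%:~R * A z + (z - 1)%:~R * A (z - 1)
  = (A z + A (z - 1) *+ 2) *+ n.
Proof.
have := congr1 (zcoef^~ z) (deriv_exp_mul _ (trinomial : {poly R}) n).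
rewrite /= zcoef_mul_trinomial !zcoef_deriv !subrK zcoefMn deriv_trinomial.
by rewrite mulrDr mulr1 mulrnAr zcoefD zcoefMn zcoefMX.
Qed.

Section TrinomialCoefficients.
Variable n : nat.

Local Notation a j := ((trinomial : {poly rat}) ^+ n)`_j.

Lemma trinomial_coef0 : a 0 = 1.
Proof. by rewrite -horner_coef0 horner_exp /trinomial !hornerE expr1n. Qed.

Lemma trinomial_coef1 : a 1 = n%:R.
Proof.
have := trinomial_coef_ode rat n 0; rewrite add0r sub0r /=.
by rewrite trinomial_coef0 !mul0r mulr0 !addr0 mul1r => ->.
Qed.

Lemma trinomial_coef_rec k :
  k.+2%:R * a k.+2 = (n%:R - k.+1%:R) * a k.+1 + (2 * n%:R - k%:R) * a k.
Proof.
have := trinomial_coef_ode rat n k.+1.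
rewrite (_ : k.+1%:Z + 1 = k.+2%:Z); last by rewrite -PoszD addn1.
rewrite (_ : k.+1%:Z - 1 = k%:Z); last by rewrite -addn1 PoszD addrK.
move=> ode.
have {}ode : k.+2%:R * a k.+2 + k.+1%:R * a k.+1 + k%:R * a k
             = (a k.+1 + a k *+ 2) *+ n := ode.
move: (a k.+2) (a k.+1) (a k) ode => x2 x1 x0 ode.
have -> : k.+2%:R * x2 = (x1 + x0 *+ 2) *+ n - k.+1%:R * x1 - k%:R * x0.
  by rewrite -ode; ring.
by ring.
Qed.

End TrinomialCoefficients.

Lemma Q_rec k : Q k.+2 = ('X - (k.+1%:R)%:P) * Q k.+1
  + (k.+1%:R)%:P * ((2%:R)%:P * 'X - (k.+1%:R)%:P + 1) * Q k.
Proof. by rewrite /Q /=; case: (Qpair k) => q0 q1 /=; rewrite -mul_polyC. Qed.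

Lemma Q0 : Q 0 = 1. Proof. by []. Qed.
Lemma Q1 : Q 1 = 'X. Proof. by []. Qed.

Lemma Q_horner n k : (Q k).[n%:R] = k`!%:R * ((trinomial : {poly rat}) ^+ n)`_k.
Proof.
suff: (Q k).[n%:R] = k`!%:R * (trinomial ^+ n)`_k
   /\ (Q k.+1).[n%:R] = k.+1`!%:R * (trinomial ^+ n)`_k.+1 by case.
elim: k => [|k [IH0 IH1]].
  by rewrite Q0 Q1 hornerX hornerC trinomial_coef0 trinomial_coef1 !mul1r.
split=> //; rewrite Q_rec !hornerE IH0 IH1.
rewrite [(k.+2)`!]factS natrM [RHS]mulrAC trinomial_coef_rec factS natrM.
move: (k`!%:R) (_`_k) (_`_k.+1) => f x0 x1; ring.
Qed.

Lemma size_linear (R : nzRingType) (c d : R) : (size (c%:P * 'X + d%:P)%R <= 2)%N.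
Proof.
rewrite size_MXaddC.
by case: ifP => // _; rewrite ltnS size_polyC_leq1.
Qed.

Lemma monic_three_term (R : nzRingType) (c : R) (l p q : {poly R}) m :
  p \is monic -> size p = m.+1 -> (size q <= m)%N -> (size l <= 2)%N ->
  ('X - c%:P) * p + l * q \is monic /\ size (('X - c%:P) * p + l * q) = m.+2.
Proof.
move=> p_monic p_size q_size l_size.
have lead_size : size (('X - c%:P) * p) = m.+2.
  by rewrite size_Mmonic ?monic_neq0 ?monicXsubC // size_XsubC p_size.
have small : (size (l * q)%R < m.+2)%N.
  apply: leq_ltn_trans (size_polyMleq l q) _.
  by rewrite -subn1; lia.
rewrite monicE lead_coefDl ?size_polyDl ?lead_size //.
by rewrite -monicE monicMl ?monicXsubC.
Qed.

Lemma Q_monic_size k : Q k \is monic /\ size (Q k) = k.+1.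
Proof.
suff: (Q k \is monic /\ size (Q k) = k.+1)
   /\ (Q k.+1 \is monic /\ size (Q k.+1) = k.+2) by case.
elim: k => [|k [[_ IH0s] [IH1m IH1s]]].
  by rewrite Q0 Q1 monic1 monicX size_poly1 size_polyX.
split=> //; rewrite Q_rec.
have -> : (k.+1%:R)%:P * ((2%:R)%:P * 'X - (k.+1%:R)%:P + 1) =
          (k.+1%:R * 2%:R)%:P * 'X + (k.+1%:R * (1 - k.+1%:R))%:P :> {poly rat}.
  by rewrite !rmorphM rmorphB rmorph1; ring.
by apply: monic_three_term; rewrite ?IH0s ?size_linear.
Qed.

(* The
   scalings are removed with Coq's syntactic [rewrite <-]: ssreflect's
   rewrite would compare the distinct rational numerals up to conversion,
   which is prohibitively slow for the larger ones. *)
Lemma Q2 : Q 2 = 'X * ('X + 1).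
Proof. by rewrite Q_rec Q1 Q0; ring. Qed.

Lemma Q3 : Q 3 = ('X - 1) * 'X * ('X + 4%:R%:P).
Proof. by rewrite Q_rec Q2 Q1; ring. Qed.

Lemma Q4 : Q 4 = ('X - 1) * 'X * ('X^2 + 7%:R *: 'X - 6%:R%:P).
Proof. by rewrite Q_rec Q3 Q2; rewrite <- !mul_polyC; ring. Qed.

Lemma Q5 : Q 5 = ('X - 2%:R%:P) * ('X - 1) * 'X * ('X + 1) * ('X + 12%:R%:P).
Proof. by rewrite Q_rec Q4 Q3; rewrite <- !mul_polyC; ring. Qed.

Lemma Q6 : Q 6 = ('X - 2%:R%:P) * ('X - 1) * 'X
                 * ('X^3 + 18%:R *: 'X^2 + 17%:R *: 'X - 120%:R%:P).
Proof. by rewrite Q_rec Q5 Q4; rewrite <- !mul_polyC; ring. Qed.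

Lemma Q7 : Q 7 = ('X - 3%:R%:P) * ('X - 2%:R%:P) * ('X - 1) * 'X
                 * ('X^3 + 27%:R *: 'X^2 + 116%:R *: 'X - 120%:R%:P).
Proof. by rewrite Q_rec Q6 Q5; rewrite <- !mul_polyC; ring. Qed.

Lemma Q8 : Q 8 = ('X - 3%:R%:P) * ('X - 2%:R%:P) * ('X - 1) * 'X * ('X + 1)
                 * ('X + 10%:R%:P) * ('X^2 + 23%:R *: 'X - 84%:R%:P).
Proof. by rewrite Q_rec Q7 Q6; rewrite <- !mul_polyC; ring. Qed.

Lemma Q9 : Q 9 = 'X * ('X - 1) * ('X - 2%:R%:P) * ('X - 3%:R%:P) * ('X - 4%:R%:P)
                 * ('X^4 + 46%:R *: 'X^3 + 467%:R *: 'X^2 + 86%:R *: 'X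
                    - 3360%:R%:P).
Proof. by rewrite Q_rec Q8 Q7; rewrite <- !mul_polyC; ring. Qed.

Lemma Q10 : Q 10 = 'X * ('X - 1) * ('X - 2%:R%:P) * ('X - 3%:R%:P) * ('X - 4%:R%:P)
                   * ('X^5 + 55%:R *: 'X^4 + 665%:R *: 'X^3 - 895%:R *: 'X^2
                      - 16626%:R *: 'X + 15120%:R%:P).
Proof. by rewrite Q_rec Q9 Q8; rewrite <- !mul_polyC; ring. Qed.

Lemma trinom_coef_Q n k :
  trinom_coef n (n%:Z - k%:Z) = (k`!%:R)^-1 * (Q k).[n%:R].
Proof.
rewrite -trinom_coef_sym opprB trinom_coefE addrC subrK Q_horner.
by rewrite mulKf // pnatr_eq0 -lt0n fact_gt0.
Qed.

Theorem corollary1 :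
  (forall n k : nat,
      trinom_coef n (n%:Z - k%:Z) = (k`!%:R)^-1 * (Q k).[n%:R])
  /\ (forall k : nat, size (Q k) = k.+1)
  /\ Q 0 = 1
  /\ Q 1 = 'X
  /\ Q 2 = 'X * ('X + 1)
  /\ Q 3 = ('X - 1) * 'X * ('X + 4%:R%:P)
  /\ Q 4 = ('X - 1) * 'X * ('X^2 + 7%:R *: 'X - 6%:R%:P)
  /\ Q 5 = ('X - 2%:R%:P) * ('X - 1) * 'X * ('X + 1) * ('X + 12%:R%:P)
  /\ Q 6 = ('X - 2%:R%:P) * ('X - 1) * 'X
           * ('X^3 + 18%:R *: 'X^2 + 17%:R *: 'X - 120%:R%:P)
  /\ Q 7 = ('X - 3%:R%:P) * ('X - 2%:R%:P) * ('X - 1) * 'X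
           * ('X^3 + 27%:R *: 'X^2 + 116%:R *: 'X - 120%:R%:P)
  /\ Q 8 = ('X - 3%:R%:P) * ('X - 2%:R%:P) * ('X - 1) * 'X * ('X + 1)
           * ('X + 10%:R%:P) * ('X^2 + 23%:R *: 'X - 84%:R%:P)
  /\ Q 9 = 'X * ('X - 1) * ('X - 2%:R%:P) * ('X - 3%:R%:P) * ('X - 4%:R%:P)
           * ('X^4 + 46%:R *: 'X^3 + 467%:R *: 'X^2 + 86%:R *: 'X
              - 3360%:R%:P)
  /\ Q 10 = 'X * ('X - 1) * ('X - 2%:R%:P) * ('X - 3%:R%:P) * ('X - 4%:R%:P)
           * ('X^5 + 55%:R *: 'X^4 + 665%:R *: 'X^3 - 895%:R *: 'X^2
              - 16626%:R *: 'X + 15120%:R%:P).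
Proof.
split; first exact: trinom_coef_Q.
split; first by move=> k; case: (Q_monic_size k).
exact: (conj Q0 (conj Q1 (conj Q2 (conj Q3 (conj Q4 (conj Q5
         (conj Q6 (conj Q7 (conj Q8 (conj Q9 Q10)))))))))).
Qed.
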